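(* Let $m\ge1$ and let $\mathbf z=(z_1,\dots,z_m)$ be a sequence of non-negative integers with at most one even entry. Then $\rho^{m+1}(\mathbf z)=(z_1+2,\dots,z_m+2)$, where $\rho=\rho_m$ is the right rotation.
   Context: Let $\mathcal Z_m$ be the set of $m$-tuples of integers with at most one even entry. The right rotation $\rho:\mathcal Z_m\to\mathcal Z_m$ is defined by: if $z_2,\dots,z_m$ are all odd, $\rho(z_1,\dots,z_m)=(z_2,\dots,z_m,z_1+1)$; if $z_v$ is even for some $v>1$, $\rho(z_1,\dots,z_m)=(z_2,\dots,z_{v-1},z_1+1,z_{v+1},\dots,z_m,z_v+1)$ (i.e. the entry $z_1+1$ is placed at position $v-1$ and $z_v+1$ at the end). For $m=1$, $\rho(z)=z+1$. *)

From Stdlib Require Import ZArith List.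
Import ListNotations.
Open Scope Z_scope.

Definition at_most_one_even (z : list Z) : Prop :=
  forall i j : nat, (i < length z)%nat -> (j < length z)%nat ->
    Z.Even (nth i z 0) -> Z.Even (nth j z 0) -> i = j.

(* Auxiliary for rho: scans rest = (z_2,...,z_m) for the first even entry z_v.
   Returns z_2..z_{v-1}, z1+1, z_{v+1}..z_m, z_v+1  if an even entry exists,
   and z_2..z_m, z1+1 otherwise. *)
Fixpoint rho_aux (a : Z) (rest : list Z) : list Z :=
  match rest with
  | [] => [a + 1]
  | x :: r => if Z.even x then (a + 1) :: r ++ [x + 1]
              else x :: rho_aux a r
  end.

Definition rho (z : list Z) : list Z :=
  match z with
  | [] => []
  | z1 :: rest => rho_aux z1 rest
  end.

From Stdlib Require Import ZArith List Lia.
Import ListNotations.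
Open Scope Z_scope.

(* A tuple with at most one even entry is either all odd, or of
   the form  P ++ e :: Q  with  P, Q  all odd and  e  even.  One application
   of rho to  a :: rest  appends  a+1  to  rest  when  rest  is all odd, and
   otherwise puts  a+1  in place of the even entry  e  and appends  e+1.
   From these two one-step rules we get, by induction on the length of the
   odd block in front:
   - iter_rho_even : (|P|+1) rotations send  P ++ e :: Q  (e even) to
                     Q ++ (e+1) :: map (+2) P;
   - iter_rho_odd  : the same formula when the middle entry  f  is odd,
                     i.e. on all-odd tuples (via the auxiliary iter_rho_carry).
   The theorem follows by applying iter_rho_even and then iter_rho_odd in the
   case with one even entry, and one rotation followed by iter_rho_even in the
   all-odd case; the lengths of the blocks add up to exactly m+1 rotations. *)

Definition all_odd (l : list Z) : Prop := Forall (fun x => Z.even x = false) l.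

Definition add2 (x : Z) : Z := x + 2.

Lemma even_succ_odd (x : Z) : Z.even x = false -> Z.even (x + 1) = true.
Proof. intros Hx. rewrite Z.even_add, Hx. reflexivity. Qed.

Lemma odd_succ_even (x : Z) : Z.even x = true -> Z.even (x + 1) = false.
Proof. intros Hx. rewrite Z.even_add, Hx. reflexivity. Qed.

Lemma all_odd_add2 (l : list Z) : all_odd l -> all_odd (map add2 l).
Proof.
  induction 1; constructor; auto.
  unfold add2. rewrite Z.even_add. now rewrite H.
Qed.

Lemma rho_aux_all_odd (a : Z) (W : list Z) :
  all_odd W -> rho_aux a W = W ++ [a + 1].
Proof. induction 1; simpl; auto. now rewrite H, IHForall. Qed.

Lemma rho_aux_first_even (a e : Z) (B Q : list Z) :
  all_odd B -> Z.even e = true ->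
  rho_aux a (B ++ e :: Q) = B ++ (a + 1) :: Q ++ [e + 1].
Proof.
  intros HB He; induction HB; simpl.
  - now rewrite He.
  - now rewrite H, IHHB.
Qed.

Lemma iter_rho_even (P Q : list Z) (e : Z) :
  all_odd P -> all_odd Q -> Z.even e = true ->
  Nat.iter (S (length P)) rho (P ++ e :: Q) = Q ++ (e + 1) :: map add2 P.
Proof.
  intros HP; revert e Q.
  induction HP as [|a P Ha HP IH]; intros e Q HQ He.
  - simpl. now rewrite rho_aux_all_odd.
  - cbn [length]. rewrite Nat.iter_succ_r. simpl.
    rewrite (rho_aux_first_even a e P Q HP He).
    rewrite <- Nat.iter_succ, IH.
    + rewrite <- app_assoc. simpl. unfold add2.
      do 3 f_equal. lia.
    + apply Forall_app; split; [exact HQ|].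
      constructor; [now apply odd_succ_even | constructor].
    + now apply even_succ_odd.
Qed.

Lemma iter_rho_carry (A B Q : list Z) (p e : Z) :
  all_odd A -> all_odd B -> Z.even p = false -> Z.even e = true ->
  Nat.iter (S (length A)) rho (A ++ p :: B ++ e :: Q) =
  B ++ (p + 1) :: Q ++ (e + 1) :: map add2 A.
Proof.
  intros HA; revert e Q.
  induction HA as [|a A Ha HA IH]; intros e Q HB Hp He.
  - simpl. now rewrite rho_aux_first_even.
  - cbn [length]. rewrite Nat.iter_succ_r. simpl.
    replace (A ++ p :: B ++ e :: Q) with ((A ++ p :: B) ++ e :: Q)
      by (now rewrite <- app_assoc).
    rewrite rho_aux_first_even; auto.
    2:{ apply Forall_app; split; auto. }
    rewrite <- app_assoc. simpl.
    rewrite <- Nat.iter_succ, IH; auto.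
    + rewrite <- app_assoc. simpl. unfold add2.
      now replace (a + 1 + 1) with (a + 2) by lia.
    + now apply even_succ_odd.
Qed.

Lemma iter_rho_odd (P Q : list Z) (f : Z) :
  all_odd P -> all_odd Q -> Z.even f = false ->
  Nat.iter (S (length P)) rho (P ++ f :: Q) = Q ++ (f + 1) :: map add2 P.
Proof.
  intros HP HQ Hf. destruct HP as [|a P Ha HP].
  - simpl. now rewrite rho_aux_all_odd.
  - cbn [length]. rewrite Nat.iter_succ_r. simpl.
    rewrite rho_aux_all_odd.
    2:{ apply Forall_app; split; [exact HP | now constructor]. }
    rewrite <- app_assoc. simpl.
    rewrite <- Nat.iter_succ, (iter_rho_carry P Q [] f (a + 1)); auto.
    + simpl. unfold add2. now replace (a + 1 + 1) with (a + 2) by lia.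
    + now apply even_succ_odd.
Qed.

Lemma at_most_one_even_split (z : list Z) :
  at_most_one_even z ->
  all_odd z \/
  exists P e Q, z = P ++ e :: Q /\ all_odd P /\ Z.even e = true /\ all_odd Q.
Proof.
  induction z as [|a z IH]; intros H.
  - left; constructor.
  - destruct (Z.even a) eqn:Ea.
    + right. exists [], a, z. repeat split; auto; [constructor|].
      apply Forall_forall. intros x Hx.
      destruct (Z.even x) eqn:Ex; auto. exfalso.
      destruct (In_nth z x 0 Hx) as [i [Hi Hn]].
      assert (Hi0 : S i = 0%nat); [|discriminate].
      apply H; simpl; try lia; apply Z.even_spec; auto. now rewrite Hn.
    + assert (H' : at_most_one_even z).
      { intros i j Hi Hj Ei Ej.
        assert (S i = S j) by (apply H; simpl; auto; lia). lia. }
      destruct (IH H') as [Ho | [P [e [Q [-> [HP [He HQ]]]]]]].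
      * left. now constructor.
      * right. exists (a :: P), e, Q. repeat split; auto. now constructor.
Qed.

Theorem lemma4p4 (m : nat) (z : list Z) :
  (1 <= m)%nat -> length z = m ->
  (forall x, In x z -> 0 <= x) ->
  at_most_one_even z ->
  Nat.iter (S m) rho z = map (fun x => x + 2) z.
Proof.
  intros Hm Hlen _ Hz. change (fun x => x + 2) with add2.
  destruct (at_most_one_even_split z Hz)
    as [Hodd | [P [e [Q [-> [HP [He HQ]]]]]]].
  - (* all odd: one rotation creates an even entry at the back *)
    destruct Hodd as [|a W Ha HW]; simpl in Hlen; [lia|]. subst m.
    rewrite Nat.iter_succ_r. simpl. rewrite rho_aux_all_odd by exact HW.
    rewrite <- Nat.iter_succ, (iter_rho_even W [] (a + 1)); auto.
    + simpl. unfold add2. now replace (a + 1 + 1) with (a + 2) by lia.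
    + constructor.
    + now apply even_succ_odd.
  - (* one even entry: pass it, then pass the resulting all-odd tuple *)
    rewrite length_app in Hlen; simpl in Hlen.
    replace (S m) with (S (length Q) + S (length P))%nat by lia.
    rewrite Nat.iter_add, iter_rho_even, iter_rho_odd; auto.
    + rewrite map_app. simpl. unfold add2.
      now replace (e + 1 + 1) with (e + 2) by lia.
    + now apply all_odd_add2.
    + now apply odd_succ_even.
Qed.
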